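(* Fix $s>2$ and $\mu^*>0$. Then for every $\mu_1>\mu^*$ there exists $\epsilon>0$ such that, for all $\mu\in[\mu^*,\mu_1]$, $d\theta(f_{s,\mu})\ge\epsilon$ on $K_\mu\setminus\Delta$.
   Context: $f_{s,\mu}$ is the repressilator vector field $\dot x=\frac{\mu}{1+y^s}-x$, $\dot y=\frac{\mu}{1+z^s}-y$, $\dot z=\frac{\mu}{1+x^s}-z$ on $\mathbb{R}^3_+$. For $\mu>0$, $K_\mu:=\{(x,y,z)\colon\frac{\mu}{2+\mu^s}\le x,y,z\le\mu\}$. $\Delta:=\mathrm{span}\{(1,1,1)\}$; $\|\mathbf{x}_\perp\|^2=\tfrac23(x^2+y^2+z^2-xy-yz-zx)$; $d\theta:=\frac{1}{\sqrt3}\frac{(z-y)dx+(x-z)dy+(y-x)dz}{\|\mathbf{x}_\perp\|^2}$ on $\mathbb{R}^3\setminus\Delta$. *)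

From Stdlib Require Import Reals.
Open Scope R_scope.

(* Real power t^s for t > 0 (all points considered have positive coordinates). *)
Definition rpow (t s : R) : R := Rpower t s.

Definition rep_f1 (s mu x y z : R) : R := mu / (1 + rpow y s) - x.
Definition rep_f2 (s mu x y z : R) : R := mu / (1 + rpow z s) - y.
Definition rep_f3 (s mu x y z : R) : R := mu / (1 + rpow x s) - z.

Definition in_K (s mu x y z : R) : Prop :=
  mu / (2 + rpow mu s) <= x <= mu /\
  mu / (2 + rpow mu s) <= y <= mu /\
  mu / (2 + rpow mu s) <= z <= mu.

Definition in_Delta (x y z : R) : Prop := x = y /\ y = z.

(* ||x_perp||^2 *)
Definition perp_sq (x y z : R) : R :=
  2 / 3 * (x ^ 2 + y ^ 2 + z ^ 2 - x * y - y * z - z * x).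

Definition dtheta (x y z v1 v2 v3 : R) : R :=
  / sqrt 3 * (((z - y) * v1 + (x - z) * v2 + (y - x) * v3) / perp_sq x y z).

Definition dtheta_f (s mu x y z : R) : R :=
  dtheta x y z (rep_f1 s mu x y z) (rep_f2 s mu x y z) (rep_f3 s mu x y z).

From Stdlib Require Import Reals Lra Psatz.
Open Scope R_scope.

(* Write g(t) = mu/(1+t^s) for the Hill function, so that
   f = (g y - x, g z - y, g x - z).  The linear part of f is annihilated by
   dtheta, and the numerator of dtheta(f) reduces to the cyclic sum
   N = x (g z - g x) + y (g x - g y) + z (g y - g z).
   On an interval [a, b] with a > 0, g decreases with slope at least
   L = mu* a^(s-1) / (1+b^s)^2 for s >= 1 and mu >= mu* ; that is, g + L id is
   antitone there.  For an antitone h the cyclic sum of h is nonnegative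
   (a cyclic rearrangement inequality); applied to h = g + L id it gives
   N >= L Q with Q = x^2+y^2+z^2-xy-yz-zx = (3/2) ||x_perp||^2 > 0 off Delta.
   Hence dtheta(f) >= (3/2) L / sqrt 3.  Finally every K_mu with
   mu in [mu*, mu1] lies in the cube [a, mu1]^3 with a = mu*/(2+mu1^s), so
   this single eps works uniformly. *)

Lemma Rpower_gt_0 (t s : R) : 0 < Rpower t s.
Proof. unfold Rpower; apply exp_pos. Qed.

Lemma Rpower_diff_lower (s a u v : R) :
  1 <= s -> 0 < a -> a <= u -> u <= v ->
  Rpower a (s - 1) * (v - u) <= Rpower v s - Rpower u s.
Proof.
  intros hs ha hau huv.
  assert (split_pow : forall w, 0 < w -> Rpower w s = Rpower w (s - 1) * w).
  { intros w hw. rewrite <- (Rpower_1 w hw) at 3. rewrite <- Rpower_plus.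
    f_equal; ring. }
  assert (hau' : Rpower a (s - 1) <= Rpower u (s - 1))
    by (apply Rle_Rpower_l; lra).
  assert (huv' : Rpower u (s - 1) <= Rpower v (s - 1))
    by (apply Rle_Rpower_l; lra).
  pose proof (Rpower_gt_0 a (s - 1)).
  rewrite (split_pow v), (split_pow u) by lra.
  nra.
Qed.

Lemma hill_decrease_lower (s mu' mu a b u v : R) :
  1 <= s -> 0 <= mu' <= mu -> 0 < a -> a <= u -> u <= v -> v <= b ->
  mu' * Rpower a (s - 1) / (1 + Rpower b s) ^ 2 * (v - u)
  <= mu / (1 + Rpower u s) - mu / (1 + Rpower v s).
Proof.
  intros hs hmu ha hau huv hvb.
  pose proof (Rpower_diff_lower s a u v hs ha hau huv) as hdiff.
  pose proof (Rpower_gt_0 a (s - 1)).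
  pose proof (Rpower_gt_0 u s).
  assert (hVU : Rpower u s <= Rpower v s) by (apply Rle_Rpower_l; lra).
  assert (hVB : Rpower v s <= Rpower b s) by (apply Rle_Rpower_l; lra).
  set (A := Rpower a (s - 1)) in *.
  set (U := Rpower u s) in *. set (V := Rpower v s) in *.
  set (B := Rpower b s) in *.
  assert (hsplit : mu / (1 + U) - mu / (1 + V) = mu * (V - U) * / ((1 + U) * (1 + V)))
    by (field; lra).
  rewrite hsplit.
  replace (mu' * A / (1 + B) ^ 2 * (v - u)) with (mu' * (A * (v - u)) * / (1 + B) ^ 2)
    by (field; lra).
  apply Rmult_le_compat.
  - apply Rmult_le_pos; [lra | apply Rmult_le_pos; lra].
  - left; apply Rinv_0_lt_compat, pow_lt; lra.
  - apply Rmult_le_compat; try lra. apply Rmult_le_pos; lra.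
  - apply Rinv_le_contravar; [apply Rmult_lt_0_compat; lra |].
    simpl; rewrite Rmult_1_r. apply Rmult_le_compat; lra.
Qed.

Lemma cyclic_sum_antitone_min (h : R -> R) (x y z : R) :
  (forall u v, u <= v -> (u = x \/ u = y \/ u = z) -> (v = x \/ v = y \/ v = z) ->
     h v <= h u) ->
  x <= y -> x <= z ->
  0 <= x * (h z - h x) + y * (h x - h y) + z * (h y - h z).
Proof.
  intros anti hxy hxz.
  destruct (Rle_dec y z) as [hyz | hzy].
  - assert (hx_z : h z <= h x) by (apply anti; lra).
    assert (hy_z : h z <= h y) by (apply anti; lra).
    replace (x * (h z - h x) + y * (h x - h y) + z * (h y - h z))
      with ((h x - h z) * (y - x) + (h y - h z) * (z - y)) by ring.
    apply Rplus_le_le_0_compat; apply Rmult_le_pos; lra.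
  - assert (hx_y : h y <= h x) by (apply anti; lra).
    assert (hx_z : h z <= h x) by (apply anti; lra).
    replace (x * (h z - h x) + y * (h x - h y) + z * (h y - h z))
      with ((h x - h y) * (y - z) + (h x - h z) * (z - x)) by ring.
    apply Rplus_le_le_0_compat; apply Rmult_le_pos; lra.
Qed.

(* The sum is invariant under cyclic rotation, so we may rotate
   the smallest point into first position. *)
Lemma cyclic_sum_antitone (D : R -> Prop) (h : R -> R) (x y z : R) :
  (forall u v, D u -> D v -> u <= v -> h v <= h u) ->
  D x -> D y -> D z ->
  0 <= x * (h z - h x) + y * (h x - h y) + z * (h y - h z).
Proof.
  intros anti Dx Dy Dz.
  assert (anti3 : forall p q r, D p -> D q -> D r ->
    forall u v, u <= v -> (u = p \/ u = q \/ u = r) -> (v = p \/ v = q \/ v = r) ->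
    h v <= h u).
  { intros p q r Dp Dq Dr u v huv hu hv. apply anti; auto.
    - destruct hu as [-> | [-> | ->]]; assumption.
    - destruct hv as [-> | [-> | ->]]; assumption. }
  destruct (Rle_dec x y), (Rle_dec y z), (Rle_dec x z).
  all: first
    [ apply (cyclic_sum_antitone_min h x y z (anti3 x y z Dx Dy Dz)); lra
    | replace (x * (h z - h x) + y * (h x - h y) + z * (h y - h z))
        with (y * (h x - h y) + z * (h y - h z) + x * (h z - h x)) by ring;
      apply (cyclic_sum_antitone_min h y z x (anti3 y z x Dy Dz Dx)); lra
    | replace (x * (h z - h x) + y * (h x - h y) + z * (h y - h z))
        with (z * (h y - h z) + x * (h z - h x) + y * (h x - h y)) by ring;
      apply (cyclic_sum_antitone_min h z x y (anti3 z x y Dz Dx Dy)); lra ].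
Qed.

Lemma cyclic_sum_lower (D : R -> Prop) (g : R -> R) (L x y z : R) :
  (forall u v, D u -> D v -> u <= v -> g v + L * v <= g u + L * u) ->
  D x -> D y -> D z ->
  L * (x ^ 2 + y ^ 2 + z ^ 2 - x * y - y * z - z * x)
  <= x * (g z - g x) + y * (g x - g y) + z * (g y - g z).
Proof.
  intros anti Dx Dy Dz.
  pose proof (cyclic_sum_antitone D (fun t => g t + L * t) x y z anti Dx Dy Dz)
    as hsum.
  cbv beta in hsum. nra.
Qed.

(* Off the diagonal Delta, ||x_perp||^2 > 0, because
   3 ||x_perp||^2 = (x-y)^2 + (y-z)^2 + (z-x)^2. *)
Lemma perp_sq_pos (x y z : R) : ~ in_Delta x y z -> 0 < perp_sq x y z.
Proof.
  intros hD. unfold perp_sq.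
  assert (hsq : 2 * (x ^ 2 + y ^ 2 + z ^ 2 - x * y - y * z - z * x)
                = (x - y) ^ 2 + (y - z) ^ 2 + (z - x) ^ 2) by ring.
  assert (hne : x - y <> 0 \/ y - z <> 0)
    by (unfold in_Delta in hD; destruct (Req_dec x y); [right | left];
        intro; apply hD; lra).
  pose proof (pow2_ge_0 (x - y)). pose proof (pow2_ge_0 (y - z)).
  pose proof (pow2_ge_0 (z - x)).
  destruct hne as [hne | hne]; pose proof (Rsqr_pos_lt _ hne); unfold Rsqr in *; nra.
Qed.

Lemma dtheta_cyclic_lower (D : R -> Prop) (g : R -> R) (L x y z : R) :
  (forall u v, D u -> D v -> u <= v -> g v + L * v <= g u + L * u) ->
  D x -> D y -> D z -> ~ in_Delta x y z ->
  / sqrt 3 * (3 / 2 * L) <= dtheta x y z (g y - x) (g z - y) (g x - z).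
Proof.
  intros anti Dx Dy Dz hD.
  pose proof (cyclic_sum_lower D g L x y z anti Dx Dy Dz) as hN.
  pose proof (perp_sq_pos x y z hD) as hP.
  assert (hs3 : 0 < / sqrt 3) by (apply Rinv_0_lt_compat, sqrt_lt_R0; lra).
  unfold dtheta. apply Rmult_le_compat_l; [lra |].
  unfold perp_sq in *.
  set (Q := x ^ 2 + y ^ 2 + z ^ 2 - x * y - y * z - z * x) in *.
  replace ((z - y) * (g y - x) + (x - z) * (g z - y) + (y - x) * (g x - z))
    with (x * (g z - g x) + y * (g x - g y) + z * (g y - g z)) by ring.
  set (N := x * (g z - g x) + y * (g x - g y) + z * (g y - g z)) in *.
  assert (hdiff : N / (2 / 3 * Q) - 3 / 2 * L = 3 / 2 * ((N - L * Q) / Q))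
    by (field; lra).
  assert (0 <= (N - L * Q) / Q)
    by (apply Rmult_le_pos; [lra | left; apply Rinv_0_lt_compat; lra]).
  lra.
Qed.

Lemma K_lower_edge (s mustar mu mu1 : R) :
  0 <= s -> 0 < mustar -> mustar <= mu <= mu1 ->
  mustar / (2 + Rpower mu1 s) <= mu / (2 + rpow mu s).
Proof.
  intros hs hm [hm1 hm2]. unfold rpow.
  assert (Rpower mu s <= Rpower mu1 s) by (apply Rle_Rpower_l; lra).
  pose proof (Rpower_gt_0 mu s).
  unfold Rdiv. apply Rmult_le_compat; try lra.
  - left; apply Rinv_0_lt_compat; lra.
  - apply Rinv_le_contravar; lra.
Qed.

Theorem proposition4 (s mustar : R) (hs : 2 < s) (hmu : 0 < mustar) :
  forall mu1 : R, mustar < mu1 ->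
  exists eps : R, 0 < eps /\
    forall mu : R, mustar <= mu <= mu1 ->
    forall x y z : R, in_K s mu x y z -> ~ in_Delta x y z ->
      eps <= dtheta_f s mu x y z.
Proof.
  intros mu1 hmu1.
  set (a := mustar / (2 + Rpower mu1 s)).
  set (L := mustar * Rpower a (s - 1) / (1 + Rpower mu1 s) ^ 2).
  pose proof (Rpower_gt_0 mu1 s).
  assert (ha : 0 < a) by (unfold a; apply Rdiv_lt_0_compat; lra).
  assert (hL : 0 < L).
  { unfold L. apply Rdiv_lt_0_compat; [| apply pow_lt; lra].
    apply Rmult_lt_0_compat; [lra | apply Rpower_gt_0]. }
  assert (hs3 : 0 < / sqrt 3) by (apply Rinv_0_lt_compat, sqrt_lt_R0; lra).
  exists (/ sqrt 3 * (3 / 2 * L)). split; [nra |].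
  intros mu hmu_range x y z HK HD.
  pose proof (K_lower_edge s mustar mu mu1 ltac:(lra) hmu hmu_range) as hedge.
  fold a in hedge.
  set (D := fun t => a <= t <= mu1).
  assert (anti : forall u v, D u -> D v -> u <= v ->
    mu / (1 + rpow v s) + L * v <= mu / (1 + rpow u s) + L * u).
  { intros u v [hu _] [_ hv] huv. unfold rpow.
    pose proof (hill_decrease_lower s mustar mu a mu1 u v ltac:(lra) ltac:(lra)
                  ha hu huv hv) as hdec.
    fold L in hdec. lra. }
  unfold in_K in HK.
  destruct HK as [[hx1 hx2] [[hy1 hy2] [hz1 hz2]]].
  apply (dtheta_cyclic_lower D (fun t => mu / (1 + rpow t s)) L x y z anti);
    unfold D; auto; lra.
Qed.
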